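(* Let $\mathfrak g$ be a finite-dimensional two-step solvable Lie algebra over a field $k$ of characteristic zero which is generated as a Lie algebra by two elements. Then $\mathfrak g$ admits a complete LR-structure.
   Context: Two-step solvable means $[[\mathfrak g,\mathfrak g],[\mathfrak g,\mathfrak g]]=0$. An LR-structure on a Lie algebra $\mathfrak g$ is a bilinear product $\cdot$ on its underlying space with $x\cdot(y\cdot z)=y\cdot(x\cdot z)$, $(x\cdot y)\cdot z=(x\cdot z)\cdot y$ and $x\cdot y-y\cdot x=[x,y]$ for all $x,y,z$; it is complete if all right multiplications $R(x)\colon y\mapsto y\cdot x$ are nilpotent. *)

From HB Require Import structures.
From mathcomp Require Import all_boot all_order all_algebra.
Set Implicit Arguments. Unset Strict Implicit. Unset Printing Implicit Defensive.
Import GRing.Theory.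
Local Open Scope ring_scope.

Definition bilinear_op (k : fieldType) (V : vectType k) (f : V -> V -> V) :=
  (forall (a : k) (x y z : V), f (a *: x + y) z = a *: f x z + f y z) /\
  (forall (a : k) (x y z : V), f z (a *: x + y) = a *: f z x + f z y).

Definition is_lie_bracket (k : fieldType) (V : vectType k) (br : V -> V -> V) :=
  [/\ bilinear_op br,
      (forall x : V, br x x = 0) &
      (forall x y z : V, br x (br y z) + br y (br z x) + br z (br x y) = 0)].

Definition in_derived (k : fieldType) (V : vectType k) (br : V -> V -> V) (u : V) :=
  exists s : seq (V * V), u = \sum_(p <- s) br p.1 p.2.

Definition two_step_solvable (k : fieldType) (V : vectType k) (br : V -> V -> V) :=
  forall u v : V, in_derived br u -> in_derived br v -> br u v = 0.

Definition lie_generated_by (k : fieldType) (V : vectType k) (br : V -> V -> V) (a b : V) :=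
  forall U : {vspace V}, a \in U -> b \in U ->
    (forall x y : V, x \in U -> y \in U -> br x y \in U) -> U = fullv.

Definition is_LR_structure (k : fieldType) (V : vectType k) (br mul : V -> V -> V) :=
  [/\ bilinear_op mul,
      (forall x y z : V, mul x (mul y z) = mul y (mul x z)),
      (forall x y z : V, mul (mul x y) z = mul (mul x z) y) &
      (forall x y : V, mul x y - mul y x = br x y)].

Definition LR_complete (k : fieldType) (V : vectType k) (mul : V -> V -> V) :=
  forall x : V, exists n : nat, forall y : V, iter n (fun z => mul z x) y = 0.

From HB Require Import structures.
From mathcomp Require Import all_boot all_order all_algebra.
From mathcomp Require Import ring zify.
From Stdlib Require Import Classical ClassicalEpsilon.
Import GRing.Theory.
Local Open Scope ring_scope.

(* Let g be generated by a and b, put X = ad a, Y = ad b and c = [a,b].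
   As [g,g] is abelian, the Jacobi identity makes X and Y commute on [g,g];
   hence all "adjoint polynomials" (the unital algebra generated by X and Y)
   commute on [g,g].  So Q = {f c | f adjoint polynomial} is a cyclic module
   over a commutative algebra, i.e. a commutative ring with unit c for the
   product (f c) * t = f t, in which X and Y act as multiplication by
   alpha = [a,c] and beta = [b,c].  Generation gives g = k a + k b + Q.
   Fitting's lemma for X on Q yields an idempotent e of Q (where alpha is
   nilpotent) and w with e w = 0, alpha w = beta (1 - e).

   Finally it builds
   Q and its ring structure inside g and transports the product along the
   coordinates g -> k x k x Q. *)

Section LinearAlgebra.
Variables (K : fieldType) (vT : vectType K).

(* A predicate closed under linear combinations is the membership predicate
   of a subspace (grow a subspace inside the predicate until it is maximal). *)
Lemma vspace_of_closed_pred (P : vT -> Prop) :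
  P 0 -> (forall x y, P x -> P y -> P (x + y)) -> (forall t x, P x -> P (t *: x)) ->
  {U : {vspace vT} | forall v, v \in U <-> P v}.
Proof.
move=> P0 PD PZ; apply: constructive_indefinite_description.
pose inP (U : {vspace vT}) := forall u, u \in U -> P u.
suff grow n U : (\dim {:vT} - \dim U < n)%N -> inP U ->
    exists U', inP U' /\ forall v, P v -> v \in U'.
  have inP0 : inP 0%VS by move=> u /[!memv0] /eqP ->.
  have [|U [PU UP]] := grow (\dim {:vT}).+1 0%VS _ inP0; first by rewrite dimv0; lia.
  by exists U => v; split; [apply: PU | apply: UP].
elim: n U => [//|n IH] U dimU PU.
have [[v [Pv Uv]]|allU] := classic (exists v, P v /\ v \notin U); last first.
  exists U; split=> // v Pv; apply: NNPP => Uv; apply: allU; exists v.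
  by split=> //; apply/negP.
apply: (IH (U + <[v]>)%VS).
- have ltU : (\dim U < \dim (U + <[v]>))%N.
    rewrite (ltn_leqif (dimv_leqif_eq (addvSl U _))); apply: contra Uv => /eqP ->.
    by rewrite (subvP (addvSr U _)) ?memv_line.
  have := dimvS (subvf (U + <[v]>)%VS); lia.
- by move=> _ /memv_addP[u /PU Pu [_ /vlineP[t ->] ->]]; apply: PD => //; apply: PZ.
Qed.

Lemma nonincreasing_plateau {d : nat -> nat} :
  (forall n, d n.+1 <= d n)%N -> exists n, d n.+1 = d n.
Proof.
move=> dec; move: {2}(d 0) (leqnn (d 0)) => m; elim: m d dec => [|m IH] d dec d0.
  by exists 0; apply/eqP; rewrite eqn_leq dec (leq_trans d0).
have [eq_d|neq_d] := eqVneq (d 1) (d 0); first by exists 0.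
have [n dn] : exists n, d n.+2 = d n.+1.
  have lt10 : (d 1 < d 0)%N by rewrite ltn_neqAle neq_d dec.
  by apply: (IH (fun n => d n.+1)) => //=; rewrite -ltnS (leq_trans lt10 d0).
by exists n.+1.
Qed.

Variable f : 'End(vT).

Definition img_iter n (U : {vspace vT}) := iter n (lfun_img f) U.

Lemma mem_img_iter n (U : {vspace vT}) v :
  v \in img_iter n U -> exists2 u, u \in U & v = iter n f u.
Proof.
elim: n v => [|n IH] v; first by exists v.
by move=> /memv_imgP[x /IH[u Uu ->] ->]; exists u.
Qed.

Lemma img_iter_mem n {U : {vspace vT}} {u} : u \in U -> iter n f u \in img_iter n U.
Proof. by move=> Uu; elim: n => //= n IH; apply: memv_img. Qed.

(* Fitting: for an f-stable subspace U the decreasing chain f^n(U) becomes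
   stationary, so some power f^m (m > 0) maps U into f^(2m)(U). *)
Lemma img_iter_stable (U : {vspace vT}) : (f @: U <= U)%VS ->
  exists n, forall u, u \in U -> exists2 u', u' \in U & iter n.+1 f u = iter (n.+1 + n.+1) f u'.
Proof.
move=> fU; have dec n : (img_iter n.+1 U <= img_iter n U)%VS.
  by elim: n => [|n IH] //=; apply: limgS.
have [n eq_dim] := nonincreasing_plateau (fun n => dimvS (dec n)).
have eq_n : img_iter n.+1 U = img_iter n U.
  by apply/eqP; rewrite eqEdim dec eq_dim leqnn.
have stable m : (n <= m)%N -> img_iter m U = img_iter n U.
  move=> /subnK <-; elim: (m - n)%N => //= i IH.
  by rewrite -[in RHS]eq_n /= IH.
exists n => u Uu; have := img_iter_mem n.+1 Uu.
rewrite stable ?leqnSn // -(stable (n.+1 + n.+1)); last lia.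
by move=> /mem_img_iter[u' Uu' ->]; exists u'.
Qed.
End LinearAlgebra.

Arguments vspace_of_closed_pred {K vT P}.
Arguments img_iter_stable {K vT f U}.

Section FittingIdempotent.
Variables (R : comPzRingType) (al be : R).

(* Ring form of Fitting's lemma: if al^m = al^(2m) r (m > 0), then u = al^m r
   is idempotent, al is nilpotent on e = 1 - u and invertible on u R (with
   inverse al^(m-1) r), which provides w with e w = 0 and al w = be (1 - e). *)
Lemma fitting_idempotent n r : al ^+ n.+1 = al ^+ n.+1 * al ^+ n.+1 * r ->
  exists e w : R, [/\ e * e = e, e * w = 0, al * w = be - be * e & al ^+ n.+1 * e = 0].
Proof.
rewrite exprS; move: (al ^+ n) => p def_p.
have idem : (al * p * r) * (al * p * r) = al * p * r by rewrite [in RHS]def_p; ring.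
exists (1 - al * p * r), (p * r * be * (al * p * r)); split.
- by ring: idem.
- by ring: idem.
- by ring: idem.
- by transitivity (al * p - al * p * (al * p) * r); [ring | rewrite -def_p subrr].
Qed.
End FittingIdempotent.

Arguments fitting_idempotent {R al} be {n r}.

Section TripleLR.
Variables (R : comPzRingType) (al be e w : R).

(* Triples (l, m, q) model g = k a + k b + Q: the bracket is
   [a,b] = 1, [a,q] = al q, [b,q] = be q, [q,q'] = 0 (this is lrbr), and the
   candidate LR-product, which always lands in the third component, is
     (l,m,q).(l',m',q') = e (m + al q) (be q' - l')
                          + (1 - e) (l m' + (l al + m be) q') + m m' w. *)
Definition lrmul (u v : R * R * R) : R :=
  let: (lu, mu, qu) := u in let: (lv, mv, qv) := v in
  e * (mu + al * qu) * (be * qv - lv) + (1 - e) * (lu * mv + (lu * al + mu * be) * qv)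
  + mu * mv * w.

Definition lrbr (u v : R * R * R) : R :=
  let: (lu, mu, qu) := u in let: (lv, mv, qv) := v in
  lu * mv - mu * lv + lu * (al * qv) - lv * (al * qu) + mu * (be * qv) - mv * (be * qu).

Definition inR (s : R) : R * R * R := (0, 0, s).

Definition lin3 (t : R) (u v : R * R * R) : R * R * R :=
  (t * u.1.1 + v.1.1, t * u.1.2 + v.1.2, t * u.2 + v.2).

Lemma lrmul_linl t x y z : lrmul (lin3 t x y) z = t * lrmul x z + lrmul y z.
Proof. by case: x => [[? ?] ?]; case: y => [[? ?] ?]; case: z => [[? ?] ?] /=; ring. Qed.
Lemma lrmul_linr t x y z : lrmul z (lin3 t x y) = t * lrmul z x + lrmul z y.
Proof. by case: x => [[? ?] ?]; case: y => [[? ?] ?]; case: z => [[? ?] ?] /=; ring. Qed.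

Lemma lrmul_skew u v : lrmul u v - lrmul v u = lrbr u v.
Proof. by case: u => [[? ?] ?]; case: v => [[? ?] ?] /=; ring. Qed.

Lemma lrmul_inR x s : lrmul (inR s) x = e * al * (be * x.2 - x.1.1) * s.
Proof. by case: x => [[? ?] ?] /=; ring. Qed.

Lemma lrmul_inR_nilpotent n x s : al ^+ n.+1 * e = 0 ->
  iter n.+1 (fun t => lrmul (inR t) x) s = 0.
Proof.
move=> nil; have -> : iter n.+1 (fun t => lrmul (inR t) x) s
    = (e * al * (be * x.2 - x.1.1)) ^+ n.+1 * s.
  by elim: n.+1 => [|m IH]; rewrite ?mul1r // iterS lrmul_inR IH exprS; ring.
rewrite !exprMn exprS; move: (be * x.2 - x.1.1) => d.
by transitivity (al ^+ n.+1 * e * (e ^+ n * d ^+ n.+1 * s)); [ring | rewrite nil !mul0r].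
Qed.

Hypotheses (ee : e * e = e) (ew : e * w = 0) (aw : al * w = be - be * e).

Lemma lrmul_left x y z : lrmul x (inR (lrmul y z)) = lrmul y (inR (lrmul x z)).
Proof. case: x => [[? ?] ?]; case: y => [[? ?] ?]; case: z => [[? ?] ?] /=; ring: ee ew aw. Qed.
Lemma lrmul_right x y z : lrmul (inR (lrmul x y)) z = lrmul (inR (lrmul x z)) y.
Proof. case: x => [[? ?] ?]; case: y => [[? ?] ?]; case: z => [[? ?] ?] /=; ring: ee ew aw. Qed.

End TripleLR.

Arguments lrmul {R}.
Arguments lrbr {R}.
Arguments inR {R}.
Arguments lin3 {R}.
Arguments lrmul_left {R al be e w}.
Arguments lrmul_right {R al be e w}.

Section TwoGeneratedLieAlgebra.
Variables (k : fieldType) (V : vectType k) (br : V -> V -> V) (a b : V).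
Hypothesis lie : is_lie_bracket br.

Lemma brDl x y z : br (x + y) z = br x z + br y z.
Proof. by case: lie => [[linl _] _ _]; have := linl 1 x y z; rewrite !scale1r. Qed.
Lemma brDr x y z : br z (x + y) = br z x + br z y.
Proof. by case: lie => [[_ linr] _ _]; have := linr 1 x y z; rewrite !scale1r. Qed.
Lemma br0l z : br 0 z = 0.
Proof. by apply: (addrI (br 0 z)); rewrite -brDl !addr0. Qed.
Lemma br0r z : br z 0 = 0.
Proof. by apply: (addrI (br z 0)); rewrite -brDr !addr0. Qed.
Lemma brZl t x z : br (t *: x) z = t *: br x z.
Proof.
by case: lie => [[linl _] _ _]; have := linl t x 0 z; rewrite !addr0 br0l addr0.
Qed.
Lemma brZr t x z : br z (t *: x) = t *: br z x.
Proof.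
by case: lie => [[_ linr] _ _]; have := linr t x 0 z; rewrite !addr0 br0r addr0.
Qed.
Lemma br_alt x : br x x = 0. Proof. by case: lie. Qed.
Lemma br_anti x y : br x y = - br y x.
Proof.
apply/eqP; rewrite -addr_eq0; have := br_alt (x + y).
by rewrite brDl !brDr !br_alt add0r addr0 => ->.
Qed.

Lemma in_derived_br x y : in_derived br (br x y).
Proof. by exists [:: (x, y)]; rewrite big_seq1. Qed.
Lemma in_derivedD u v : in_derived br u -> in_derived br v -> in_derived br (u + v).
Proof. by move=> [s ->] [t ->]; exists (s ++ t); rewrite big_cat. Qed.
Lemma in_derivedZ t u : in_derived br u -> in_derived br (t *: u).
Proof.
move=> [s ->]; exists [seq (t *: p.1, p.2) | p <- s].
by rewrite big_map scaler_sumr; apply: eq_bigr => p _; rewrite brZl.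
Qed.

(* X = ad a and Y = ad b; c = [a,b] will be the unit of the ring Q. *)
Definition X := br a.
Definition Y := br b.
Definition c := br a b.

Lemma X_is_linear : linear X.
Proof. by move=> t u v; rewrite /X brDr brZr. Qed.
HB.instance Definition _ := GRing.isLinear.Build k V V *:%R X X_is_linear.

Hypothesis solv : two_step_solvable br.

(* By Jacobi, ad a and ad b commute on the abelian ideal [g,g]. *)
Lemma XY_comm u : in_derived br u -> X (Y u) = Y (X u).
Proof.
move=> der_u; case: lie => [_ _ jacobi]; have := jacobi a b u.
have -> : br u (br a b) = 0 by apply: solv => //; apply: in_derived_br.
rewrite addr0 (br_anti u a) -scaleN1r brZr scaleN1r.
by move/eqP; rewrite subr_eq0 => /eqP.
Qed.

Inductive adpoly : (V -> V) -> Prop :=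
| adpoly_id : adpoly id
| adpoly_X : adpoly X
| adpoly_Y : adpoly Y
| adpoly_add f g : adpoly f -> adpoly g -> adpoly (fun v => f v + g v)
| adpoly_scale t f : adpoly f -> adpoly (fun v => t *: f v)
| adpoly_comp f g : adpoly f -> adpoly g -> adpoly (fun v => f (g v)).
Arguments adpoly_add {f g}.
Arguments adpoly_scale t {f}.
Arguments adpoly_comp {f g}.

Lemma adpoly_linear {f} : adpoly f -> linear f.
Proof.
elim=> {f} [||| f g _ linf _ ling | s f _ linf | f g _ linf _ ling] t u v //=.
- exact: X_is_linear.
- by rewrite /Y brDr brZr.
- by rewrite linf ling scalerDr addrACA.
- by rewrite linf scalerDr !scalerA mulrC.
- by rewrite ling linf.
Qed.

Lemma adpolyD f u v : adpoly f -> f (u + v) = f u + f v.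
Proof. by move=> /adpoly_linear/(_ 1 u v); rewrite !scale1r. Qed.
Lemma adpoly0 f : adpoly f -> f 0 = 0.
Proof. by move=> pf; apply: (addrI (f 0)); rewrite -adpolyD // !addr0. Qed.
Lemma adpolyZ f t u : adpoly f -> f (t *: u) = t *: f u.
Proof. by move=> pf; have := adpoly_linear pf t u 0; rewrite !addr0 adpoly0 // addr0. Qed.

Lemma adpoly_derived f u : adpoly f -> in_derived br u -> in_derived br (f u).
Proof.
move=> pf; elim: pf u => {f} [||| f g _ df _ dg | s f _ df | f g _ df _ dg] u du //=.
- exact: in_derived_br.
- exact: in_derived_br.
- by apply: in_derivedD; [apply: df | apply: dg].
- by apply: in_derivedZ; apply: df.
- by apply: df; apply: dg.
Qed.

(* Since X and Y commute on [g,g], all adjoint polynomials commute there. *)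
Lemma adpoly_commXY {f u} : adpoly f -> in_derived br u ->
  f (X u) = X (f u) /\ f (Y u) = Y (f u).
Proof.
move=> pf; elim: pf u => {f} [||| f g _ cf _ cg | s f _ cf | f g _ cf pg cg] u du /=.
- by [].
- by rewrite XY_comm.
- by rewrite XY_comm.
- by have [-> ->] := cf u du; have [-> ->] := cg u du; rewrite /X /Y !brDr.
- by have [-> ->] := cf u du; rewrite /X /Y !brZr.
- by have [-> ->] := cg u du; apply: cf; apply: adpoly_derived.
Qed.

Lemma adpoly_comm {f g u} : adpoly f -> adpoly g -> in_derived br u -> f (g u) = g (f u).
Proof.
move=> pf pg; elim: pg u => {g} [||| g h _ cg _ ch | s g _ cg | g h _ cg ph ch] u du /=.
- by [].
- by case: (adpoly_commXY pf du).
- by case: (adpoly_commXY pf du).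
- by rewrite adpolyD // cg // ch.
- by rewrite adpolyZ // cg.
- by rewrite cg ?ch //; apply: adpoly_derived.
Qed.

Definition in_cyclic v := exists2 f, adpoly f & v = f c.

Lemma in_cyclic0 : in_cyclic 0.
Proof. by exists (fun v => 0 *: v); [apply: adpoly_scale; apply: adpoly_id | rewrite scale0r]. Qed.
Lemma in_cyclicD u v : in_cyclic u -> in_cyclic v -> in_cyclic (u + v).
Proof. by move=> [f pf ->] [g pg ->]; exists (fun v => f v + g v) => //; apply: adpoly_add. Qed.
Lemma in_cyclicZ t v : in_cyclic v -> in_cyclic (t *: v).
Proof. by move=> [f pf ->]; exists (fun v => t *: f v) => //; apply: adpoly_scale. Qed.

Definition Q : {vspace V} := sval (vspace_of_closed_pred in_cyclic0 in_cyclicD in_cyclicZ).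

Lemma memQ v : v \in Q <-> in_cyclic v.
Proof. exact: (svalP (vspace_of_closed_pred in_cyclic0 in_cyclicD in_cyclicZ)). Qed.

Lemma cQ : c \in Q.
Proof. by apply/memQ; exists id => //; apply: adpoly_id. Qed.
Lemma adpolyQ f v : adpoly f -> v \in Q -> f v \in Q.
Proof.
by move=> pf /memQ[g pg ->]; apply/memQ; exists (fun v => f (g v)) => //; apply: adpoly_comp.
Qed.
Lemma Q_derived v : v \in Q -> in_derived br v.
Proof. by move=> /memQ[f pf ->]; apply: adpoly_derived => //; apply: in_derived_br. Qed.
Lemma brQ {u v} : u \in Q -> v \in Q -> br u v = 0.
Proof. by move=> /Q_derived du /Q_derived dv; apply: solv. Qed.

(* Multiplication on Q: s * (g c) = g s, computed by any adjoint polynomial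
   f with f c = s; it does not depend on the choice of f. *)
Definition opQ (s : V) : V -> V := epsilon (inhabits id) (fun f => adpoly f /\ f c = s).

Lemma opQE {s t h} : t \in Q -> adpoly h -> h c = s -> opQ s t = h t.
Proof.
move=> /memQ[g pg ->] ph hc.
have [pf fc] : adpoly (opQ s) /\ opQ s c = s.
  by apply: (epsilon_spec (inhabits id) (fun f => adpoly f /\ f c = s)); exists h.
have dc := in_derived_br a b.
by rewrite (adpoly_comm pf pg dc) fc -hc (adpoly_comm pg ph dc).
Qed.

Definition SQ := subvs_of Q.
HB.instance Definition _ := Vector.on SQ.

Definition mulQ (s t : SQ) : SQ := vsproj Q (opQ (vsval s) (vsval t)).
Definition oneQ : SQ := vsproj Q c.

Lemma vsval_mulQ {s} t {h} : adpoly h -> h c = vsval s -> vsval (mulQ s t) = h (vsval t).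
Proof. by move=> ph hc; rewrite vsprojK (opQE (subvsP t) ph hc) // adpolyQ ?subvsP. Qed.

(* Every element of Q is f c for an adjoint polynomial f; the ring axioms
   follow by choosing such f for each factor. *)
Lemma SQ_cyclic (s : SQ) : exists2 f, adpoly f & f c = vsval s.
Proof. by have /memQ[f pf ->] := subvsP s; exists f. Qed.

Lemma mulQA : associative mulQ.
Proof.
move=> s t u; have [f pf fc] := SQ_cyclic s; have [g pg gc] := SQ_cyclic t.
apply: val_inj; rewrite /= (vsval_mulQ _ pf fc) (vsval_mulQ _ pg gc).
by rewrite (vsval_mulQ _ (adpoly_comp pf pg)) //= gc (vsval_mulQ _ pf fc).
Qed.
Lemma mulQC : commutative mulQ.
Proof.
move=> s t; have [f pf fc] := SQ_cyclic s; have [g pg gc] := SQ_cyclic t.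
apply: val_inj; rewrite /= (vsval_mulQ _ pf fc) (vsval_mulQ _ pg gc) -fc -gc.
exact: adpoly_comm pf pg (in_derived_br a b).
Qed.
Lemma mul1Q : left_id oneQ mulQ.
Proof. by move=> s; apply: val_inj; rewrite /= (vsval_mulQ _ adpoly_id) ?vsprojK ?cQ. Qed.
Lemma mulQDl : left_distributive mulQ +%R.
Proof.
move=> s s' t; have [f pf fc] := SQ_cyclic s; have [g pg gc] := SQ_cyclic s'.
apply: val_inj; rewrite /= (vsval_mulQ _ pf fc) (vsval_mulQ _ pg gc).
by rewrite (vsval_mulQ _ (adpoly_add pf pg)) // fc gc.
Qed.

HB.instance Definition _ := GRing.Zmodule_isComPzRing.Build SQ mulQA mulQC mul1Q mulQDl.

Lemma vsval1 : vsval (1 : SQ) = c. Proof. exact: vsprojK cQ. Qed.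

Definition alpha : SQ := vsproj Q (X c).
Definition beta : SQ := vsproj Q (Y c).

Lemma vsval_alpha s : vsval (alpha * s) = X (vsval s).
Proof. by rewrite (vsval_mulQ _ adpoly_X) // vsprojK // adpolyQ ?cQ //; apply: adpoly_X. Qed.
Lemma vsval_beta s : vsval (beta * s) = Y (vsval s).
Proof. by rewrite (vsval_mulQ _ adpoly_Y) // vsprojK // adpolyQ ?cQ //; apply: adpoly_Y. Qed.
Lemma scalQ (t : k) (s : SQ) : t *: (1 : SQ) * s = t *: s.
Proof.
apply: val_inj; rewrite /= (vsval_mulQ _ (adpoly_scale t adpoly_id)) //.
by rewrite linearZ /= vsval1.
Qed.
Lemma iterX n s : iter n X (vsval s) = vsval (alpha ^+ n * s).
Proof. by elim: n => [|n IH]; rewrite ?mul1r // iterS IH exprS -mulrA vsval_alpha. Qed.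

Hypothesis gen : lie_generated_by br a b.

Definition span_ab := (<[a]> + <[b]>)%VS.

Lemma br_span_Q t1 t2 q s1 s2 r : q \in Q -> r \in Q ->
  br (t1 *: a + t2 *: b + q) (s1 *: a + s2 *: b + r) \in Q.
Proof.
move=> Qq Qr; rewrite !brDl !brDr !brZl !brZr !br_alt (brQ Qq Qr) (br_anti b a).
rewrite (br_anti q a) (br_anti q b) -/c -/(X q) -/(X r) -/(Y q) -/(Y r).
have XQ v : v \in Q -> X v \in Q by apply: adpolyQ; apply: adpoly_X.
have YQ v : v \in Q -> Y v \in Q by apply: adpolyQ; apply: adpoly_Y.
by rewrite !(rpredD, rpredN, rpredZ, rpred0, cQ, XQ, YQ).
Qed.

Lemma span_abQ : (span_ab + Q)%VS = fullv.
Proof.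
have decompP x : x \in (span_ab + Q)%VS -> exists t1 t2 q, q \in Q /\ x = t1 *: a + t2 *: b + q.
  move=> /memv_addP[_ /memv_addP[_ /vlineP[t1 ->] [_ /vlineP[t2 ->] ->]] [q Qq ->]].
  by exists t1, t2, q.
apply: gen.
- by rewrite (subvP (addvSl _ _)) // (subvP (addvSl _ _)) ?memv_line.
- by rewrite (subvP (addvSl _ _)) // (subvP (addvSr _ _)) ?memv_line.
move=> x y /decompP[t1 [t2 [q [Qq ->]]]] /decompP[s1 [s2 [r [Qr ->]]]].
by rewrite (subvP (addvSr _ _)) // br_span_Q.
Qed.

Definition projQ : 'End(V) := addv_pi2 span_ab Q.
Definition projW : 'End(V) := addv_pi1 span_ab Q.
Definition coef_a v := coord [tuple a] 0 (addv_pi1 <[a]> <[b]> (projW v)).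
Definition coef_b v := coord [tuple b] 0 (addv_pi2 <[a]> <[b]> (projW v)).

Lemma line_coord {z y : V} : y \in <[z]>%VS -> coord [tuple z] 0 y *: z = y.
Proof. by rewrite -span_seq1 => /coord_span {2}->; rewrite big_ord1. Qed.

Lemma decomp v : v = coef_a v *: a + coef_b v *: b + projQ v.
Proof.
have vW : v \in (span_ab + Q)%VS by rewrite span_abQ memvf.
rewrite /coef_a /coef_b (line_coord (memv_pi1 _ _ _)) (line_coord (memv_pi2 _ _ _)).
rewrite (addv_pi1_pi2 (memv_pi1 span_ab Q v)).
by rewrite /projW /projQ (addv_pi1_pi2 vW).
Qed.

Lemma projW_Q v : v \in Q -> projW v = 0.
Proof.
have vWQ : v \in (span_ab + Q)%VS by rewrite span_abQ memvf.
move=> Qv; apply: (addIr v); rewrite add0r -[in RHS](addv_pi1_pi2 vWQ).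
by rewrite addv_pi2_id.
Qed.

Definition coords v : SQ * SQ * SQ :=
  (coef_a v *: (1 : SQ), coef_b v *: (1 : SQ), vsproj Q (projQ v)).

Lemma coords_vsval (s : SQ) : coords (vsval s) = inR s.
Proof.
rewrite /coords /coef_a /coef_b projW_Q ?subvsP // !linear0 !scale0r.
by rewrite /projQ addv_pi2_id ?subvsP // vsvalK.
Qed.

Lemma coords_linear t x y : coords (t *: x + y) = lin3 (t *: (1 : SQ)) (coords x) (coords y).
Proof.
rewrite /coords /lin3 /= !scalQ /coef_a /coef_b !linearP /=.
by rewrite !scalerDl !scalerA.
Qed.

Lemma vsvalD (s t : SQ) : vsval s + vsval t = vsval (s + t).
Proof. by rewrite raddfD. Qed.
Lemma vsvalN (s : SQ) : - vsval s = vsval (- s).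
Proof. by rewrite raddfN. Qed.
Lemma vsvalZ t (s : SQ) : t *: vsval s = vsval (t *: (1 : SQ) * s).
Proof. by rewrite scalQ linearZ. Qed.

Lemma br_coords u v : br u v = vsval (lrbr alpha beta (coords u) (coords v)).
Proof.
set qu := vsproj Q (projQ u); set qv := vsproj Q (projQ v).
have pu : projQ u = vsval qu by rewrite vsprojK ?memv_pi2.
have pv : projQ v = vsval qv by rewrite vsprojK ?memv_pi2.
rewrite {1}(decomp u) {1}(decomp v) pu pv.
rewrite !brDl !brDr !brZl !brZr !br_alt (brQ (subvsP qu) (subvsP qv)).
rewrite (br_anti b a) (br_anti (vsval qu) a) (br_anti (vsval qu) b).
rewrite -/c -!/(X _) -!/(Y _) -vsval1 -!vsval_alpha -!vsval_beta.
rewrite !scaler0 !addr0 !add0r !scalerN !vsvalZ !vsvalN !vsvalD.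
by apply: (congr1 (fun s : SQ => vsval s)); rewrite /lrbr /=; ring.
Qed.

Lemma fitting_data : exists n (e w : SQ),
  [/\ e * e = e, e * w = 0, alpha * w = beta - beta * e & alpha ^+ n.+1 * e = 0].
Proof.
pose Xh : 'End(V) := linfun X.
have XhE : Xh =1 X by move=> v; rewrite lfunE.
have XhQ : (Xh @: Q <= Q)%VS.
  by apply/subvP=> _ /memv_imgP[v Qv ->]; rewrite XhE adpolyQ //; apply: adpoly_X.
have [n /(_ c cQ)[u Qu]] := img_iter_stable XhQ.
rewrite !(eq_iter XhE) -vsval1 -(vsprojK Qu) !iterX mulr1 exprD => /val_inj def_n.
by have [e [w eqs]] := fitting_idempotent beta def_n; exists n, e, w.
Qed.

Section LRProduct.
Variables (n : nat) (e w : SQ).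
Hypotheses (ee : e * e = e) (ew : e * w = 0) (aw : alpha * w = beta - beta * e).
Hypothesis nil : alpha ^+ n.+1 * e = 0.

Definition lrprod (u v : V) : V := vsval (lrmul alpha beta e w (coords u) (coords v)).

Lemma lrprod_bilinear : bilinear_op lrprod.
Proof.
split=> t x y z; rewrite /lrprod coords_linear.
- by rewrite lrmul_linl -vsvalD -vsvalZ.
- by rewrite lrmul_linr -vsvalD -vsvalZ.
Qed.

Lemma lrprod_LR : is_LR_structure br lrprod.
Proof.
split=> [|x y z|x y z|x y]; rewrite /lrprod ?coords_vsval.
- exact: lrprod_bilinear.
- by rewrite (lrmul_left ee ew aw).
- by rewrite (lrmul_right ee ew aw).
- by rewrite br_coords -(lrmul_skew _ _ _ e w) vsvalN vsvalD.
Qed.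

Lemma lrprod_complete : LR_complete lrprod.
Proof.
move=> x; exists n.+2 => y; rewrite iterSr.
have iter_vsval m (s : SQ) : iter m (fun z => lrprod z x) (vsval s)
    = vsval (iter m (fun t => lrmul alpha beta e w (inR t) (coords x)) s).
  by elim: m => //= m ->; rewrite /lrprod coords_vsval.
by rewrite {2}/lrprod iter_vsval lrmul_inR_nilpotent // linear0.
Qed.
End LRProduct.

Lemma two_generated_complete_LR :
  exists mul : V -> V -> V, is_LR_structure br mul /\ LR_complete mul.
Proof.
have [n [e [w [ee ew aw nil]]]] := fitting_data.
exists (lrprod e w); split; [exact: lrprod_LR | exact: lrprod_complete nil].
Qed.

End TwoGeneratedLieAlgebra.

Theorem theorem4p3 (k : fieldType) (V : vectType k) (br : V -> V -> V) :
  [pchar k] =i pred0 ->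
  is_lie_bracket br ->
  two_step_solvable br ->
  (exists a b : V, lie_generated_by br a b) ->
  exists mul : V -> V -> V, is_LR_structure br mul /\ LR_complete mul.
Proof.
move=> _ lie solv [a [b gen]].
exact: two_generated_complete_LR lie solv gen.
Qed.
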